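(* Let $(R,\mathfrak{m})$ be a Noetherian local ring, $M$ a finitely generated $R$-module, and $S \subseteq M$ a subset. Let $I(S,M) := \{y \in \langle S \rangle \mid f(y) \in \mathfrak{m} \text{ for all } f \in \mathrm{Hom}_R(M,R)\}$, an $R$-submodule of $\langle S \rangle$. Then $\delta_\mathfrak{m}(S,M) = \lambda_R(\langle S \rangle / I(S,M))$, where $\lambda_R$ denotes length.
   Context: $\langle S\rangle$ denotes the $R$-submodule of $M$ generated by $S$. $\delta_\mathfrak{m}(S,M)$ is the largest integer $n \ge 0$ such that there is a free $R$-submodule $G \subseteq \langle S\rangle$ of rank $n$ which is a direct summand of $M$. *)

From HB Require Import structures.
From mathcomp Require Import all_boot all_order all_algebra.
Set Implicit Arguments. Unset Strict Implicit. Unset Printing Implicit Defensive.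
Import GRing.Theory.
Local Open Scope ring_scope.

Section CommAlg.
Variable R : comNzRingType.

Definition is_ideal (I : R -> Prop) : Prop :=
  [/\ I 0, (forall x y, I x -> I y -> I (x + y)) & (forall r x, I x -> I (r * x))].

Definition ideal_span n (a : 'I_n -> R) (x : R) : Prop :=
  exists c : 'I_n -> R, x = \sum_(i < n) c i * a i.

Definition noetherian_ring : Prop :=
  forall I : R -> Prop, is_ideal I ->
    exists n (a : 'I_n -> R), forall x, I x <-> ideal_span a x.

Definition is_maximal_ideal (m : R -> Prop) : Prop :=
  [/\ is_ideal m, ~ m 1 &
      forall J : R -> Prop, is_ideal J -> (forall x, m x -> J x) ->
        (forall x, J x <-> m x) \/ J 1].

Definition local_ring (m : R -> Prop) : Prop :=
  is_maximal_ideal m /\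
  forall J : R -> Prop, is_maximal_ideal J -> forall x, J x <-> m x.

Variable M : lmodType R.

Definition is_submod (N : M -> Prop) : Prop :=
  [/\ N 0, (forall x y, N x -> N y -> N (x + y)) & (forall r x, N x -> N (r *: x))].

Definition gen (S : M -> Prop) (x : M) : Prop :=
  exists n (v : 'I_n -> M) (c : 'I_n -> R),
    (forall i, S (v i)) /\ x = \sum_(i < n) c i *: v i.

Definition fin_gen_mod : Prop :=
  exists n (v : 'I_n -> M), forall x, gen (fun y => exists i, y = v i) x.

Definition is_RHom (f : M -> R) : Prop :=
  (forall x y, f (x + y) = f x + f y) /\ (forall r x, f (r *: x) = r * f x).

Definition ISM (m : R -> Prop) (S : M -> Prop) (y : M) : Prop :=
  gen S y /\ forall f : M -> R, is_RHom f -> m (f y).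

Definition sub_strict (A B : M -> Prop) : Prop :=
  (forall x, A x -> B x) /\ exists x, B x /\ ~ A x.

(* a chain L <= N_0 < N_1 < ... < N_n <= N of submodules, i.e. a chain of
   length n of submodules of N/L *)
Definition chain_between (L N : M -> Prop) (n : nat) : Prop :=
  exists C : nat -> (M -> Prop),
    [/\ forall i, (i <= n)%N -> is_submod (C i),
        forall i, (i <= n)%N -> forall x, L x -> C i x,
        forall i, (i <= n)%N -> forall x, C i x -> N x &
        forall i, (i < n)%N -> sub_strict (C i) (C i.+1)].

Definition quot_length_is (L N : M -> Prop) (n : nat) : Prop :=
  chain_between L N n /\ forall k, chain_between L N k -> (k <= n)%N.

(* there is a free R-submodule G <= <S> of rank n (basis v of size n)
   that is a direct summand of M *)
Definition free_summand_in (S : M -> Prop) (n : nat) : Prop :=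
  exists v : 'I_n -> M,
    [/\ (forall c : 'I_n -> R, \sum_(i < n) c i *: v i = 0 -> forall i, c i = 0),
        (forall i, gen S (v i)) &
        exists K : M -> Prop,
          [/\ is_submod K,
              (forall x, exists g k, [/\ gen (fun y => exists i, y = v i) g, K k & x = g + k]) &
              (forall x, gen (fun y => exists i, y = v i) x -> K x -> x = 0)]].

Definition delta_is (S : M -> Prop) (n : nat) : Prop :=
  free_summand_in S n /\ forall k, free_summand_in S k -> (k <= n)%N.

End CommAlg.

From HB Require Import structures.
From mathcomp Require Import all_boot all_order all_algebra.
From Stdlib Require Import Classical IndefiniteDescription.
Set Implicit Arguments. Unset Strict Implicit. Unset Printing Implicit Defensive.
Import GRing.Theory.
Local Open Scope ring_scope.

(* Both numbers equal the largest k admitting v_1, ..., v_k in <S> and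
   f_1, ..., f_k in Hom_R(M, R) with f_i(v_j) = delta_ij.  Such a biorthogonal
   family spans a free direct summand of M, complemented by the common kernel of
   the f_i; conversely the coordinate functions of a free summand form one.
   The family yields the chain
     I(S,M) <= I + Rv_1 < ... < I + Rv_1 + ... + Rv_k <= <S>,
   strict because f_j maps the j-th term into m while f_j(v_j) = 1.  Conversely,
   given a chain C_0 < ... < C_k, an element of C_(j+1) \ C_j minus its
   projection on v_1, ..., v_j lies outside I(S,M), so some f sends it outside m,
   that is to a unit since R is local; rescaling f and correcting it by the
   f_i extends the family.  Finally k is bounded by the number g of generators
   of M: the identity matrix (f_i(v_j)) factors through R^g, impossible for
   k > g since a k x g by g x k product has determinant 0. *)

Section Rings.
Variable R : comNzRingType.

Lemma sum_mul_delta (I : finType) (F : I -> R) i : \sum_j F j * (j == i)%:R = F i.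
Proof.
by rewrite (bigD1 i) //= eqxx mulr1 big1 ?addr0 // => j /negbTE ->; rewrite mulr0.
Qed.

Lemma ideal_sum (J : R -> Prop) n (c a : 'I_n -> R) :
  is_ideal J -> (forall i, J (a i)) -> J (\sum_i c i * a i).
Proof. by case=> J0 JD JM Ja; apply: big_ind => // i _; apply: JM. Qed.

Lemma noetherian_chain_stable (C : nat -> R -> Prop) :
  noetherian_ring R -> (forall n, is_ideal (C n)) -> (forall n x, C n x -> C n.+1 x) ->
  exists N, forall x, C N.+1 x -> C N x.
Proof.
move=> noeth idC incC.
have monoC : {homo C : i j / (i <= j)%N >-> forall x, i x -> j x}.
  by apply: homo_leq => // B A D sAB sBD x /sAB /sBD.
pose U x := exists n, C n x.
have idU : is_ideal U.
  split; first by exists 0%N; case: (idC 0%N).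
  - move=> x y [i Cx] [j Cy]; exists (maxn i j); case: (idC (maxn i j)) => _ CD _.
    by apply: CD; [apply: monoC Cx; rewrite leq_maxl | apply: monoC Cy; rewrite leq_maxr].
  - by move=> r x [i Cx]; exists i; case: (idC i) => _ _; apply.
have [p [a spanU]] := noeth U idU.
have [level Ca] : exists level : 'I_p -> nat, forall i, C (level i) (a i).
  apply: (functional_choice (fun i n => C n (a i))) => i.
  apply/spanU; exists (fun j => (j == i)%:R).
  by under eq_bigr do rewrite mulrC; rewrite sum_mul_delta.
exists (\max_i level i)%N => x CNx.
have /spanU [c ->] : U x by exists (\max_i level i).+1.
apply: ideal_sum => [|i]; first exact: idC.
exact: monoC (leq_bigmax i) _ (Ca i).
Qed.

Lemma nonmaximal_ideal_grows (J : R -> Prop) :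
  is_ideal J -> ~ J 1 -> ~ is_maximal_ideal J ->
  exists J', [/\ is_ideal J', ~ J' 1, (forall x, J x -> J' x) & exists x, J' x /\ ~ J x].
Proof.
move=> idJ nJ1 nmaxJ; apply: NNPP => nogrow; apply: nmaxJ; split=> // J' idJ' sJJ'.
case: (classic (J' 1)) => [|nJ'1]; [by right | left => x; split; last exact: sJJ'].
by move=> J'x; apply: NNPP => nJx; apply: nogrow; exists J'; split=> //; exists x.
Qed.

Lemma noetherian_maximal_ideal_above (J0 : R -> Prop) :
  noetherian_ring R -> is_ideal J0 -> ~ J0 1 ->
  exists J, is_maximal_ideal J /\ forall x, J0 x -> J x.
Proof.
move=> noeth idJ0 nJ01; apply: NNPP => nomax.
pose proper J := [/\ is_ideal J, ~ J 1 & forall x, J0 x -> J x].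
have [next nextP] : exists next : (R -> Prop) -> R -> Prop, forall J, proper J ->
    [/\ proper (next J), forall x, J x -> next J x & exists x, next J x /\ ~ J x].
  apply: (functional_choice (fun J J' => proper J ->
    [/\ proper J', forall x, J x -> J' x & exists x, J' x /\ ~ J x])) => J.
  case: (classic (proper J)) => [[idJ nJ1 sJ0J] | nJ]; last by exists J.
  have nmaxJ : ~ is_maximal_ideal J by move=> maxJ; apply: nomax; exists J.
  have [J' [idJ' nJ'1 sJJ' grows]] := nonmaximal_ideal_grows idJ nJ1 nmaxJ.
  by exists J' => _; split=> //; split=> // x /sJ0J /sJJ'.
pose C n := iter n next J0.
have properC n : proper (C n) by elim: n => [|n /nextP []] //; split.
have [N stableN] : exists N, forall x, C N.+1 x -> C N x.
  apply: noetherian_chain_stable => // n; first by case: (properC n).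
  by case: (nextP _ (properC n)).
have [_ _ [x [CNx nCNx]]] := nextP _ (properC N).
exact: nCNx (stableN x CNx).
Qed.

Lemma local_unit (m : R -> Prop) c :
  noetherian_ring R -> local_ring m -> ~ m c -> exists w, w * c = 1.
Proof.
move=> noeth [_ uniqm] nmc; apply: NNPP => nunit.
pose Rc x := exists r, x = r * c.
have idRc : is_ideal Rc.
  split; first by exists 0; rewrite mul0r.
  - by move=> x y [r ->] [s ->]; exists (r + s); rewrite mulrDl.
  - by move=> r x [s ->]; exists (r * s); rewrite mulrA.
have nRc1 : ~ Rc 1 by move=> [r /esym rc1]; apply: nunit; exists r.
have [J [maxJ sRcJ]] := noetherian_maximal_ideal_above noeth idRc nRc1.
by apply: nmc; apply/(uniqm J maxJ)/sRcJ; exists 1; rewrite mul1r.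
Qed.

Lemma mulmx_wide_neq1 g p (B : 'M[R]_(g + p.+1, g)) (A : 'M[R]_(g, g + p.+1)) :
  B *m A != 1%:M.
Proof.
apply/eqP => BA1.
have : row_mx B 0 *m col_mx A (0 : 'M_(p.+1, g + p.+1)) = 1%:M.
  by rewrite mul_row_col mulmx0 addr0 BA1.
move/(congr1 determinant); rewrite det_mulmx det1.
rewrite (expand_det_col _ (rshift g (@ord0 p))) big1 ?mul0r => [/eqP|i _].
  by rewrite eq_sym oner_eq0.
by rewrite row_mxEr mxE mul0r.
Qed.

End Rings.

Definition ord_rcons T k (F : 'I_k -> T) (x : T) (j : 'I_k.+1) : T :=
  if unlift ord_max j is Some i then F i else x.

Section Modules.
Variables (R : comNzRingType) (M : lmodType R).

Local Notation fam v := (fun y => exists i, y = v i).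

Lemma RHom0 (f : M -> R) : is_RHom f -> f 0 = 0.
Proof. by case=> _ fZ; rewrite -(scale0r (0 : M)) fZ mul0r. Qed.

Lemma RHomB (f : M -> R) x y : is_RHom f -> f (x - y) = f x - f y.
Proof. by case=> fD fZ; rewrite fD -scaleN1r fZ mulN1r. Qed.

Lemma RHom_sum (f : M -> R) n (F : 'I_n -> M) :
  is_RHom f -> f (\sum_i F i) = \sum_i f (F i).
Proof.
move=> homf; apply: (big_rec2 (fun x y => f x = y)); first exact: RHom0.
by move=> i x y _ <-; rewrite homf.1.
Qed.

Lemma RHomB_lincomb (g : M -> R) n (c : 'I_n -> R) (f : 'I_n -> M -> R) :
  is_RHom g -> (forall j, is_RHom (f j)) -> is_RHom (fun z => g z - \sum_j c j * f j z).
Proof.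
move=> [gD gZ] homf; split=> [x y | r x].
- rewrite gD addrACA -opprD -big_split /=; congr (_ - _).
  by apply: eq_bigr => j _; rewrite (homf j).1 mulrDr.
- rewrite gZ mulrBr mulr_sumr; congr (_ - _); apply: eq_bigr => j _.
  by rewrite (homf j).2 mulrCA.
Qed.

Lemma sum_scale_delta n (F : 'I_n -> M) i : \sum_j (j == i)%:R *: F j = F i.
Proof.
by rewrite (bigD1 i) //= eqxx scale1r big1 ?addr0 // => j /negbTE ->; rewrite scale0r.
Qed.

Lemma submodB (P : M -> Prop) x y : is_submod P -> P x -> P y -> P (x - y).
Proof. by case=> _ PD PZ Px Py; apply: PD => //; rewrite -scaleN1r; apply: PZ. Qed.

Lemma submod_sum (P : M -> Prop) n (F : 'I_n -> M) :
  is_submod P -> (forall i, P (F i)) -> P (\sum_i F i).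
Proof. by case=> P0 PD _ PF; apply: big_ind. Qed.

Lemma RHom_preim_submod (f : M -> R) (J : R -> Prop) :
  is_RHom f -> is_ideal J -> is_submod (fun x => J (f x)).
Proof.
move=> homf [J0 JD JM]; split=> [|x y Jx Jy|r x Jx]; first by rewrite RHom0.
- by rewrite homf.1; apply: JD.
- by rewrite homf.2; apply: JM.
Qed.

Lemma gen_in (S : M -> Prop) x : S x -> gen S x.
Proof.
by move=> Sx; exists 1%N, (fun _ => x), (fun _ => 1); rewrite big_ord1 scale1r.
Qed.

Lemma gen_submod (S : M -> Prop) : is_submod (gen S).
Proof.
split.
- by exists 0%N, (fun _ => 0), (fun _ => 0); rewrite big_ord0; split=> [[]|].
- move=> _ _ [p [u [c [Su ->]]]] [q [u' [c' [Su' ->]]]].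
  exists (p + q)%N, (fun i => match split i with inl a => u a | inr b => u' b end),
    (fun i => match split i with inl a => c a | inr b => c' b end); split.
  + by move=> i; case: (split i).
  + by rewrite big_split_ord /=; congr (_ + _); apply: eq_bigr => i _;
      rewrite (unsplitK (inl _)) || rewrite (unsplitK (inr _)).
- move=> r _ [p [u [c [Su ->]]]]; exists p, u, (fun i => r * c i); split=> //.
  by rewrite scaler_sumr; apply: eq_bigr => i _; rewrite scalerA.
Qed.

Lemma gen_min (S N : M -> Prop) :
  is_submod N -> (forall x, S x -> N x) -> forall x, gen S x -> N x.
Proof.
move=> subN SN _ [n [v [c [Sv ->]]]]; apply: submod_sum => // i.
by case: subN => _ _; apply; apply: SN.
Qed.

Definition span n (v : 'I_n -> M) (x : M) : Prop :=
  exists d : 'I_n -> R, x = \sum_i d i *: v i.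

Lemma span_submod n (v : 'I_n -> M) : is_submod (span v).
Proof.
split; first by exists (fun _ => 0); rewrite big1 // => i _; rewrite scale0r.
- move=> _ _ [d ->] [d' ->]; exists (fun i => d i + d' i).
  by rewrite -big_split; apply: eq_bigr => i _; rewrite scalerDl.
- move=> r _ [d ->]; exists (fun i => r * d i).
  by rewrite scaler_sumr; apply: eq_bigr => i _; rewrite scalerA.
Qed.

Lemma gen_fam_span n (v : 'I_n -> M) x : gen (fam v) x -> span v x.
Proof.
apply: gen_min => [|_ [i ->]]; first exact: span_submod.
by exists (fun j => (j == i)%:R); rewrite sum_scale_delta.
Qed.

Definition biorthogonal k (v : 'I_k -> M) (f : 'I_k -> M -> R) : Prop :=
  (forall i, is_RHom (f i)) /\ forall i j, f i (v j) = (i == j)%:R.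

Definition dual_family_in (S : M -> Prop) k : Prop :=
  exists v f, @biorthogonal k v f /\ forall j, gen S (v j).

Lemma biorthogonal0 (v : 'I_0 -> M) (f : 'I_0 -> M -> R) : biorthogonal v f.
Proof. by split; case. Qed.

Section Biorthogonal.
Variables (k : nat) (v : 'I_k -> M) (f : 'I_k -> M -> R).
Hypothesis vf : biorthogonal v f.

Lemma biorthogonal_coord c i : f i (\sum_j c j *: v j) = c i.
Proof.
rewrite RHom_sum; last exact: vf.1.
under eq_bigr do rewrite (vf.1 i).2 vf.2 eq_sym.
exact: sum_mul_delta.
Qed.

Lemma biorthogonal_residual x i : f i (x - \sum_j f j x *: v j) = 0.
Proof. by rewrite RHomB ?biorthogonal_coord ?subrr //; apply: vf.1. Qed.

Lemma biorthogonal_free c : \sum_j c j *: v j = 0 -> forall i, c i = 0.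
Proof. by move=> c0 i; rewrite -(biorthogonal_coord c i) c0 RHom0 //; apply: vf.1. Qed.

Lemma biorthogonal_rcons y g :
  (forall i, f i y = 0) -> is_RHom g -> g y = 1 ->
  biorthogonal (ord_rcons v y) (ord_rcons f (fun z => g z - \sum_j g (v j) * f j z)).
Proof.
move=> fy0 homg gy1; rewrite /ord_rcons; split=> [i | i j].
  by case: (unliftP ord_max i) => [i' _|_]; [apply: vf.1 | apply: RHomB_lincomb vf.1].
case: (unliftP ord_max i) => [i' -> | ->]; case: (unliftP ord_max j) => [j' -> | ->].
- by rewrite vf.2 (inj_eq lift_inj).
- by rewrite fy0 eq_sym (negbTE (neq_lift _ _)).
- rewrite (negbTE (neq_lift _ _)); under eq_bigr do rewrite vf.2.
  by rewrite sum_mul_delta subrr.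
- by rewrite eqxx gy1 big1 ?subr0 // => l _; rewrite fy0 mulr0.
Qed.

End Biorthogonal.

Lemma dual_family0 S : dual_family_in S 0.
Proof. by exists (fun _ => 0), (fun _ _ => 0); split; [apply: biorthogonal0 | case]. Qed.

Lemma dual_family_free_summand S k : dual_family_in S k -> free_summand_in S k.
Proof.
move=> [v [f [vf Sv]]]; exists v; split=> //; first exact: (biorthogonal_free vf).
exists (fun x => forall i, f i x = 0); split.
- split=> [i | x y x0 y0 i | r x x0 i]; first exact: RHom0 (vf.1 i).
  + by rewrite (vf.1 i).1 x0 y0 addr0.
  + by rewrite (vf.1 i).2 x0 mulr0.
- move=> x; exists (\sum_j f j x *: v j), (x - \sum_j f j x *: v j); split.
  + by exists k, v, (fun j => f j x); split=> // j; exists j.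
  + exact: biorthogonal_residual.
  + by rewrite addrC subrK.
- move=> _ /gen_fam_span [d ->] Kd; rewrite big1 // => i _.
  by rewrite -(biorthogonal_coord vf d i) Kd scale0r.
Qed.

Lemma free_summand_dual_family S k : free_summand_in S k -> dual_family_in S k.
Proof.
move=> [v [freev Sv [K [subK decK capK]]]].
have coord x : exists d : 'I_k -> R, K (x - \sum_i d i *: v i).
  have [_ [kx [/gen_fam_span [d ->] Kkx ->]]] := decK x.
  by exists d; rewrite addrC addKr.
have coord_uniq x d d' : K (x - \sum_i d i *: v i) -> K (x - \sum_i d' i *: v i) ->
    forall i, d i = d' i.
  move=> Kd Kd' i; apply/eqP; rewrite -subr_eq0; apply/eqP; move: i.
  apply: freev; apply: capK.
    by exists k, v, (fun i => d i - d' i); split=> // i; exists i.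
  under eq_bigr do rewrite scalerBl; rewrite sumrB.
  have -> : \sum_i d i *: v i - \sum_i d' i *: v i =
            (x - \sum_i d' i *: v i) - (x - \sum_i d i *: v i).
    by rewrite [x - _]addrC addrKA opprK addrC.
  exact: submodB.
have [D KD] :=
  functional_choice (fun x (d : 'I_k -> R) => K (x - \sum_i d i *: v i)) coord.
have [K0 addK scaleK] := subK.
exists v, (fun i x => D x i); split=> //; split=> [i | i j].
- split=> [x y | r x].
  + apply: (coord_uniq (x + y) _ (fun i => D x i + D y i)) => //.
    under eq_bigr do rewrite scalerDl; rewrite big_split /= opprD addrACA.
    exact: addK.
  + apply: (coord_uniq (r *: x) _ (fun i => r * D x i)) => //.
    under eq_bigr do rewrite -scalerA; rewrite -scaler_sumr -scalerBr.
    exact: scaleK.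
- apply: (coord_uniq (v j) _ (fun i => (i == j)%:R)) => //.
  by rewrite sum_scale_delta subrr; apply: K0.
Qed.

Lemma dual_family_chain (m : R -> Prop) S k :
  is_ideal m -> ~ m 1 -> dual_family_in S k -> chain_between (ISM m S) (gen S) k.
Proof.
move=> idm nm1 [v [f [vf Sv]]].
pose C j := gen (fun z => ISM m S z \/ exists2 l : 'I_k, (l < j)%N & z = v l).
exists C; split=> [j _ | j _ x Ix | j _ | j ltjk].
- exact: gen_submod.
- by apply: gen_in; left.
- by apply: gen_min => [|z [[Sz _] | [l _ ->]]]; first exact: gen_submod.
- pose i := Ordinal ltjk.
  have Cm : forall x, C j x -> m (f i x).
    apply: (gen_min (N := fun x => m (f i x))) => [|z [[_ mz] | [l ltlj ->]]].
    + exact: RHom_preim_submod (vf.1 i) idm.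
    + exact: mz (vf.1 i).
    + by rewrite vf.2 -val_eqE /= gtn_eqF //; case: idm.
  split; last first.
    exists (v i); split; first by apply: gen_in; right; exists i.
    by move/Cm; rewrite vf.2 eqxx.
  apply: gen_min => [|z [Iz | [l ltlj ->]]]; first exact: gen_submod.
    by apply: gen_in; left.
  by apply: gen_in; right; exists l => //; apply: ltnW.
Qed.

Lemma RHom_one_of_not_ISM (m : R -> Prop) (S : M -> Prop) y :
  noetherian_ring R -> local_ring m -> gen S y -> ~ ISM m S y ->
  exists g : M -> R, is_RHom g /\ g y = 1.
Proof.
move=> noeth locm Sy nIy.
have [g [[gD gZ] nmgy]] : exists g : M -> R, is_RHom g /\ ~ m (g y).
  apply: NNPP => allm; apply: nIy; split=> // g homg.
  by apply: NNPP => nmgy; apply: allm; exists g.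
have [w wgy] := local_unit noeth locm nmgy.
exists (fun z => w * g z); split=> //.
by split=> [a b | r a]; [rewrite gD mulrDr | rewrite gZ mulrCA].
Qed.

Lemma chain_dual_family (m : R -> Prop) S n :
  noetherian_ring R -> local_ring m -> chain_between (ISM m S) (gen S) n ->
  dual_family_in S n.
Proof.
move=> noeth locm [C [subC IC CS incC]].
suff /(_ n (leqnn n)) [v [f [vf Cv]]] :
    forall k, (k <= n)%N -> exists v f, @biorthogonal k v f /\ forall j, C k (v j).
  by exists v, f; split=> // j; apply: CS (Cv j).
elim=> [_ | k IH ltkn].
  by exists (fun _ => 0), (fun _ _ => 0); split; [apply: biorthogonal0 | case].
have [v [f [vf Cv]]] := IH (ltnW ltkn).
have [sCk [x [Cx nCx]]] := incC k ltkn.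
have subCk := subC k (ltnW ltkn).
have [_ CkD CkZ] := subCk.
pose y := x - \sum_j f j x *: v j.
have Ck_sum : C k (\sum_j f j x *: v j) by apply: submod_sum subCk _ => j; apply: CkZ.
have Cy : C k.+1 y by apply: submodB (subC _ ltkn) Cx (sCk _ Ck_sum).
have nIy : ~ ISM m S y.
  move=> /(IC k (ltnW ltkn)) Cky; apply: nCx.
  by rewrite -(subrK (\sum_j f j x *: v j) x); apply: CkD.
have [g [homg gy1]] := RHom_one_of_not_ISM noeth locm (CS _ ltkn _ Cy) nIy.
exists (ord_rcons v y), (ord_rcons f (fun z => g z - \sum_j g (v j) * f j z)); split.
  by apply: biorthogonal_rcons => // i; apply: biorthogonal_residual.
by move=> j; rewrite /ord_rcons; case: (unliftP ord_max j) => [j' _|_] //; apply: sCk.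
Qed.

Lemma dual_family_le_gens S g (w : 'I_g -> M) k :
  (forall x, gen (fam w) x) -> dual_family_in S k -> (k <= g)%N.
Proof.
move=> genw [v [f [vf _]]]; rewrite leqNgt; apply/negP => ltgk.
have [p defk] : exists p, k = (g + p.+1)%N.
  by exists (k - g.+1)%N; rewrite addnS -addSn subnKC.
subst k.
have [b defv] :
    exists b : 'I_(g + p.+1) -> 'I_g -> R, forall j, v j = \sum_l b j l *: w l.
  apply: (functional_choice (fun j (b : 'I_g -> R) => v j = \sum_l b l *: w l)) => j.
  exact: gen_fam_span.
apply: (negP (mulmx_wide_neq1 (\matrix_(j, l) b j l) (\matrix_(l, i) f i (w l)))).
apply/eqP/matrixP => j i; rewrite !mxE; under eq_bigr do rewrite !mxE.
rewrite eq_sym -vf.2 defv RHom_sum; last exact: vf.1.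
by apply: eq_bigr => l _; rewrite (vf.1 i).2.
Qed.

End Modules.

Lemma bounded_nat_max (P : nat -> Prop) b :
  P 0%N -> (forall n, P n -> (n <= b)%N) -> exists n, P n /\ forall k, P k -> (k <= n)%N.
Proof.
move=> P0 Pb; apply: NNPP => nomax.
have unbounded d : exists2 n, P n & (d <= n)%N.
  elim: d => [|d [n Pn ledn]]; first by exists 0%N.
  apply: NNPP => none; apply: nomax; exists n; split=> // k Pk.
  rewrite leqNgt; apply/negP => ltnk; apply: none.
  by exists k; last exact: leq_ltn_trans ltnk.
by have [n /Pb] := unbounded b.+1; rewrite leqNgt => /negP.
Qed.

Theorem lemma3p10 (R : comNzRingType) (m : R -> Prop) (M : lmodType R)
  (S : M -> Prop) :
  noetherian_ring R -> local_ring m -> fin_gen_mod M ->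
  exists n : nat, delta_is S n /\ quot_length_is (ISM m S) (gen S) n.
Proof.
move=> noeth locm [g [w genw]].
have [[idm nm1 _] _] := locm.
have bound k : free_summand_in S k -> (k <= g)%N.
  by move/free_summand_dual_family; apply: dual_family_le_gens genw.
have free0 := dual_family_free_summand (dual_family0 S).
have [n [deltan maxn]] := bounded_nat_max free0 bound.
exists n; split; first by split.
split; first exact/dual_family_chain/free_summand_dual_family.
by move=> k /(chain_dual_family noeth locm)/dual_family_free_summand/maxn.
Qed.
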